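(* Let $X,Y$ be Hausdorff spaces with continuous $k$-means $\mu$ on $X$ and $\nu$ on $Y$, and let $g:X\to Y$ be a continuous $k$-mean homomorphism. (i) If $\mu$ and $\nu$ $\beta$-extend to $(k+1)$-means $\tilde\mu$ and $\tilde\nu$ respectively, then $g$ is a $(k+1)$-mean homomorphism from $(X,\tilde\mu)$ to $(Y,\tilde\nu)$. (ii) If $g$ is surjective and $\mu$ $\beta$-extends to a $(k+1)$-mean $\tilde\mu$, then $\nu$ $\beta$-extends to a $(k+1)$-mean $\tilde\nu$, and $g$ is then a $(k+1)$-mean homomorphism from $(X,\tilde\mu)$ to $(Y,\tilde\nu)$.
   Context: A $k$-mean is a map $\mu:X^k\to X$ with $\mu(x,\ldots,x)=x$. A map $g:X\to Y$ is a $k$-mean homomorphism from $(X,\mu)$ to $(Y,\nu)$ if $g\circ\mu=\nu\circ g_k$, where $g_k(x_1,\ldots,x_k)=(g(x_1),\ldots,g(x_k))$. Barycentric operator of a $k$-mean $\mu$: $\beta_\mu(\mathbf{x})_j=\mu(x_1,\ldots,\widehat{x_j},\ldots,x_{k+1})$ on $X^{k+1}$; a $(k+1)$-mean $\tilde\mu$ is a $\beta$-extension of $\mu$ if $\beta_\mu^n(\mathbf{x})\to(\tilde\mu(\mathbf{x}),\ldots,\tilde\mu(\mathbf{x}))$ for every $\mathbf{x}\in X^{k+1}$. *)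

From HB Require Import structures.
From mathcomp Require Import all_boot all_order all_algebra.
From mathcomp Require Import all_classical all_reals all_analysis.
Set Implicit Arguments. Unset Strict Implicit. Unset Printing Implicit Defensive.
Local Open Scope classical_set_scope.

(* X^k is represented as functions 'I_k -> X; with the product topology
   it is the type {ptws 'I_k -> X}. *)

Definition is_kmean (X : Type) (k : nat) (mu : ('I_k -> X) -> X) : Prop :=
  forall x : X, mu (fun _ => x) = x.

Definition continuous_kmean (X : topologicalType) (k : nat)
  (mu : ('I_k -> X) -> X) : Prop :=
  continuous (mu : {ptws 'I_k -> X} -> X).

Definition kmean_hom (X Y : Type) (k : nat) (g : X -> Y)
  (mu : ('I_k -> X) -> X) (nu : ('I_k -> Y) -> Y) : Prop :=
  forall xs : 'I_k -> X, g (mu xs) = nu (fun i => g (xs i)).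

(* barycentric operator: beta_mu(x)_j = mu(x_1,..,x_j omitted,..,x_{k+1}) *)
Definition barycentric (X : Type) (k : nat) (mu : ('I_k -> X) -> X)
  (xs : 'I_k.+1 -> X) : 'I_k.+1 -> X :=
  fun j => mu (fun i : 'I_k => xs (lift j i)).

Definition beta_extension (X : topologicalType) (k : nat)
  (mu : ('I_k -> X) -> X) (mut : ('I_k.+1 -> X) -> X) : Prop :=
  is_kmean mut /\
  forall xs : 'I_k.+1 -> X,
    (fun n : nat => (iter n (barycentric mu) xs : {ptws 'I_k.+1 -> X}))
      @ \oo --> ((fun _ : 'I_k.+1 => mut xs) : {ptws 'I_k.+1 -> X}).

From HB Require Import structures.
From mathcomp Require Import all_boot all_order all_algebra.
From mathcomp Require Import all_classical all_reals all_analysis.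
Local Open Scope classical_set_scope.

(* A continuous homomorphism g intertwines the barycentric operators, so it
   maps the barycentric iterates of mu at xs onto those of nu at g o xs, and
   their limit (mut xs, ..., mut xs) onto (g (mut xs), ..., g (mut xs)).
   For (i), uniqueness of limits in Y gives nut (g o xs) = g (mut xs).
   For (ii), pick a section f of g; every ys equals g o (f o ys), so the
   iterates of nu at ys converge to g (mut (f o ys)), which therefore
   defines the beta-extension of nu. *)

(* The library's [pointwise_cvgP] requires a uniform codomain. *)
Lemma ptws_cvgP {T : Type} {I : eqType} {V : topologicalType}
    (F : set_system T) {FF : Filter F} (u : T -> I -> V) (l : I -> V) :
  (fun t => u t : {ptws I -> V}) @ F --> (l : {ptws I -> V}) <->
  forall i, (fun t => u t i) @ F --> l i.
Proof.
split=> [uF i|uFi].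
  exact: cvg_trans (cvg_app (fun h => h i) uF) (@proj_continuous I _ i l).
have imT (i : I) : range (fun h : I -> V => h i) = setT.
  by rewrite eqEsubset; split=> // y _; exists (fun _ => y).
apply/(@cvg_sup (I -> V) _
  (fun i => Topological.class (initial_topology (fun h : I -> V => h i))))
  => i.
apply/cvg_image => // B /uFi FB; exists ((fun h => h i) @^-1` B) => //.
by rewrite image_preimage.
Qed.

Lemma ptws_cvg_comp {T : Type} {I : eqType} {V W : topologicalType}
    (F : set_system T) {FF : Filter F} (g : V -> W) (u : T -> I -> V)
    (l : I -> V) :
  continuous g ->
  (fun t => u t : {ptws I -> V}) @ F --> (l : {ptws I -> V}) ->
  (fun t => g \o u t : {ptws I -> W}) @ F --> (g \o l : {ptws I -> W}).
Proof.
move=> cg /ptws_cvgP ul; apply/ptws_cvgP => i.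
exact: cvg_trans (cvg_app g (ul i)) (cg _).
Qed.

Section BarycentricHom.
Context {X Y : Type} {k : nat} {mu : ('I_k -> X) -> X}.
Context {nu : ('I_k -> Y) -> Y} {g : X -> Y}.
Hypothesis hg : kmean_hom g mu nu.

Lemma barycentric_hom (xs : 'I_k.+1 -> X) :
  barycentric nu (g \o xs) = g \o barycentric mu xs.
Proof. by apply: funext => j; rewrite /barycentric /= hg. Qed.

Lemma iter_barycentric_hom n (xs : 'I_k.+1 -> X) :
  iter n (barycentric nu) (g \o xs) = g \o iter n (barycentric mu) xs.
Proof. by elim: n => //= n ->; rewrite barycentric_hom. Qed.

End BarycentricHom.

Section BetaExtensionHom.
Context {X Y : topologicalType} {k : nat}.
Context {mu : ('I_k -> X) -> X} {nu : ('I_k -> Y) -> Y} {g : X -> Y}.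
Hypotheses (cg : continuous g) (hg : kmean_hom g mu nu).

Lemma cvg_iter_barycentric_hom {mut : ('I_k.+1 -> X) -> X} :
  beta_extension mu mut -> forall xs : 'I_k.+1 -> X,
  (fun n => iter n (barycentric nu) (g \o xs) : {ptws 'I_k.+1 -> Y})
    @ \oo --> ((fun _ => g (mut xs)) : {ptws 'I_k.+1 -> Y}).
Proof.
move=> [_ bmu] xs.
have -> : (fun n => iter n (barycentric nu) (g \o xs)) =
          (fun n => g \o iter n (barycentric mu) xs).
  by apply: funext => n; exact: iter_barycentric_hom.
exact: ptws_cvg_comp cg (bmu xs).
Qed.

Lemma beta_extension_hom (mut : ('I_k.+1 -> X) -> X)
    (nut : ('I_k.+1 -> Y) -> Y) :
  hausdorff_space Y -> beta_extension mu mut -> beta_extension nu nut ->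
  kmean_hom g mut nut.
Proof.
move=> hY bmu [_ bnu] xs.
have /ptws_cvgP /(_ ord0) lim_g := cvg_iter_barycentric_hom bmu xs.
have /ptws_cvgP /(_ ord0) lim_nut := bnu (g \o xs).
exact: (cvg_unique hY (F := _ @ \oo) lim_g lim_nut).
Qed.

Lemma beta_extension_section {mut : ('I_k.+1 -> X) -> X} {f : Y -> X} :
  cancel f g -> beta_extension mu mut ->
  beta_extension nu (fun ys => g (mut (f \o ys))).
Proof.
move=> fK bmu; split=> [y|ys].
  by rewrite /= bmu.1 fK.
have gfys : g \o (f \o ys) = ys by apply: funext => i /=; rewrite fK.
rewrite -{1}gfys; exact: cvg_iter_barycentric_hom.
Qed.

End BetaExtensionHom.

Theorem proposition7p2 (X Y : topologicalType) (k : nat)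
  (hX : hausdorff_space X) (hY : hausdorff_space Y)
  (mu : ('I_k -> X) -> X) (nu : ('I_k -> Y) -> Y) (g : X -> Y)
  (hmu : is_kmean mu) (hnu : is_kmean nu)
  (cmu : continuous_kmean mu) (cnu : continuous_kmean nu)
  (cg : continuous g) (hg : kmean_hom g mu nu) :
  (forall (mut : ('I_k.+1 -> X) -> X) (nut : ('I_k.+1 -> Y) -> Y),
      beta_extension mu mut -> beta_extension nu nut ->
      kmean_hom g mut nut) /\
  ((forall y : Y, exists x : X, g x = y) ->
   forall mut : ('I_k.+1 -> X) -> X,
     beta_extension mu mut ->
     exists nut : ('I_k.+1 -> Y) -> Y,
       beta_extension nu nut /\ kmean_hom g mut nut).
Proof.
split=> [mut nut|gsurj mut bmu]; first exact: beta_extension_hom.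
have [f fK] := choice gsurj.
have bnu := beta_extension_section cg hg fK bmu.
by exists (fun ys => g (mut (f \o ys))); split; last exact: beta_extension_hom.
Qed.
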